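(* There is an absolute constant $c>0$ such that the following holds. Let $n\ge5$ be odd, $k=\frac{n-3}{2}$, $G=(V,E)=K_n$, let $C=(v_1,\dots,v_{2k+1})$ be a cycle of length $n-2$ in $G$ with $s,t$ the two vertices not on $C$, and let $F$ be the facet of $P_{(\widehat G,\widehat R)}$ defined by the canonical transformation of the $C$-induced constraint $x_{\{s,t\}}+k\cdot x(\delta(V(C)))+\sum_{e\in E[V\setminus\{s,t\}]}\ell(e)x_e\ge 2k+1$. Then there exist $\widehat a\in\mathbb{Z}^{\widehat E}$ and $\widehat b\in\mathbb{Z}$ such that $F=\{y\in P_{(\widehat G,\widehat R)}\colon \widehat a^\top y=\widehat b\}$ and $|\{\widehat a_{\widehat e}\colon\widehat e\in\widehat E\}|\le c\,n^{2/3}$.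
   Context: $\delta(V(C))$ is the set of edges with exactly one endpoint on $C$, $E[S]$ the set of edges with both endpoints in $S$, $x(S)=\sum_{e\in S}x_e$; for $i\ne j$, $\ell(\{v_i,v_j\})=|j-i|$ if $|j-i|$ is odd and $2k+1-|j-i|$ otherwise. The bipartite graph $\widehat G=(\widehat V,\widehat E)$ has vertex set $\{v^+\colon v\in V\}\cup\{v^-\colon v\in V\}$ and edges $\{v^+,v^-\}$ for $v\in V$ and $\{u^+,v^-\},\{u^-,v^+\}$ for each $\{u,v\}\in E$; red edges $\widehat R=\widehat E\setminus\{\{v^+,v^-\}\colon v\in V\}$. $P_{(\widehat G,\widehat R)}$ is the convex hull of incidence vectors of perfect matchings $M$ of $\widehat G$ with $|M\cap\widehat R|$ odd. The canonical transformation of $\sum_{e\in E}a_ex_e\ge b$ is $\sum_{\{u,v\}\in E}a_{\{u,v\}}(y_{\{u^+,v^-\}}+y_{\{u^-,v^+\}})\ge b$. (This canonical transformation defines a facet of $P_{(\widehat G,\widehat R)}$.) *)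

From HB Require Import structures.
From mathcomp Require Import all_boot all_order all_algebra.
From mathcomp Require Import reals exp.
Set Implicit Arguments. Unset Strict Implicit. Unset Printing Implicit Defensive.
Import Order.TTheory GRing.Theory Num.Theory.
Local Open Scope ring_scope.

(* G = K_n on vertex set 'I_n.  The cycle C = (v_1,...,v_{2k+1}) is given by an
   injective map v : 'I_(n-2) -> 'I_n (0-based: v i is v_{i+1}). *)

Definition kk (n : nat) : nat := (n - 3)./2.

Section Constraint.
Variables (n : nat) (v : 'I_(n-2) -> 'I_n).

Definition onC (x : 'I_n) : bool := x \in codom v.

Definition cidx (x : 'I_n) : nat := odflt 0%N (omap val [pick i | v i == x]).

Definition ell (x y : 'I_n) : nat :=
  let d := `|(cidx x)%:Z - (cidx y)%:Z|%N in
  if odd d then d else ((2 * kk n).+1 - d)%N.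

(* coefficient of x_{ {x,y} } (x <> y) in the C-induced constraint
   x_{s,t} + k x(delta(V(C))) + sum_{e in E[V\{s,t}]} l(e) x_e >= 2k+1.
   Note V \ {s,t} = V(C); an edge with no endpoint on C is {s,t}. *)
Definition cind_coef (x y : 'I_n) : int :=
  if onC x && onC y then (ell x y)%:Z
  else if onC x || onC y then (kk n)%:Z
  else 1.

Definition cind_rhs : int := ((2 * kk n).+1)%:Z.
End Constraint.

(* Hat vertices: 'I_n * bool, (u,true) = u^+,
   (u,false) = u^-.  \hat E is encoded by 'I_n * 'I_n, the pair (u,w)
   standing for the edge {u^+, w^-}; (u,u) are the edges {u^+,u^-} and the
   pairs (u,w), u <> w, are the edges {u^+,w^-} coming from {u,w} in E(K_n)
   (both {u^+,w^-} and {u^-,w^+} = (w,u) occur). *)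
Definition hedge (n : nat) := ('I_n * 'I_n)%type.

Definition hends (n : nat) (e : hedge n) : {set 'I_n * bool} :=
  [set (e.1, true); (e.2, false)].

Definition red (n : nat) (e : hedge n) : bool := e.1 != e.2.

Definition perfect_matching (n : nat) (M : {set hedge n}) : Prop :=
  forall p : 'I_n * bool, #|[set e in M | p \in hends e]| = 1%N.

Definition odd_red_pm (n : nat) (M : {set hedge n}) : Prop :=
  perfect_matching M /\ odd #|[set e in M | red e]|.

Definition in_P (R : realFieldType) (n : nat) (y : hedge n -> R) : Prop :=
  exists lam : {set hedge n} -> R,
    [/\ forall M, 0 <= lam M,
        forall M, lam M != 0 -> odd_red_pm M,
        \sum_(M : {set hedge n}) lam M = 1
      & forall e, y e = \sum_(M : {set hedge n}) lam M * (e \in M)%:R].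

Definition hdot (R : realFieldType) (n : nat) (a : hedge n -> int)
  (y : hedge n -> R) : R := \sum_(e : hedge n) (a e)%:~R * y e.

(* canonical transformation: sum_{u,v} a_{uv}(y_{u+v-} + y_{u-v+}) *)
Definition canon (n : nat) (a : 'I_n -> 'I_n -> int) (e : hedge n) : int :=
  if e.1 == e.2 then 0 else a e.1 e.2.

Definition ndistinct (n : nat) (a : hedge n -> int) : nat :=
  size (undup (codom a)).

From HB Require Import structures.
From mathcomp Require Import all_boot all_order all_algebra.
From mathcomp Require Import reals exp.
From mathcomp Require Import zify ring lra.
Set Implicit Arguments. Unset Strict Implicit. Unset Printing Implicit Defensive.
Import Order.TTheory GRing.Theory Num.Theory.
Local Open Scope ring_scope.

(* Every perfect matching of \hat G covers each u^+ and each u^- exactly once,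
   so adding alpha(u) - alpha(w) to the coefficient of {u^+, w^-} changes a^T y
   by sum alpha - sum alpha = 0 on P, and the shifted equation still defines F.
   Let B = floor((n-2)^(1/3)), write the 0-based position i of a vertex of C in
   base B as i = B^2 p2(i) + B p1(i) + p0(i), and put alpha = B^2 p2 - B p1 on C
   and alpha = 0 at s, t.  As l({v_i, v_j}) = c +- (j - i) with c in {0, n-2},
   the shifted cycle coefficients are c + 2B (p1(j) - p1(i)) + (p0(j) - p0(i))
   or c + 2B^2 (p2(i) - p2(j)) + (p0(i) - p0(j)); the remaining ones are
   k +- alpha, 0 and 1.  Each family takes O(B^2) = O(n^(2/3)) values. *)

Section MatchingPotential.
Variable n : nat.

Lemma matching_sum_end (V : zmodType) (M : {set hedge n}) (f : 'I_n -> V)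
    (b : bool) :
  perfect_matching M -> \sum_(e in M) f (if b then e.1 else e.2) = \sum_u f u.
Proof.
move=> pmM.
rewrite (partition_big (fun e : hedge n => if b then e.1 else e.2) xpredT) //=.
apply: eq_bigr => u _.
rewrite (eq_bigr (fun _ => f u)); last by move=> e /andP[_ /eqP ->].
rewrite sumr_const -[RHS]mulr1n; congr (_ *+ _).
rewrite -(pmM (u, b)); apply: eq_card => e; rewrite !inE /hends.
by case: b; rewrite !xpair_eqE /= ?andbT ?andbF ?orbF // eq_sym.
Qed.

Lemma matching_sum_potential (V : zmodType) (M : {set hedge n})
    (f : 'I_n -> V) :
  perfect_matching M -> \sum_(e in M) (f e.1 - f e.2) = 0.
Proof.
move=> pmM; rewrite sumrB (matching_sum_end _ true pmM).
by rewrite (matching_sum_end _ false pmM) subrr.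
Qed.

Lemma in_P_potential (R : realFieldType) (y : hedge n -> R) (f : 'I_n -> R) :
  in_P y -> \sum_e (f e.1 - f e.2) * y e = 0.
Proof.
case=> lam [_ lam_pm _ yE].
under eq_bigr => e _ do rewrite yE big_distrr /=.
rewrite exchange_big /=; apply: big1 => M _.
have [->|lamM] := eqVneq (lam M) 0.
  by apply: big1 => e _; rewrite mul0r mulr0.
have [pmM _] := lam_pm M lamM.
transitivity (lam M * \sum_(e in M) (f e.1 - f e.2)).
  rewrite big_distrr [RHS]big_mkcond; apply: eq_bigr => e _ /=.
  by case: (e \in M); rewrite /= ?mulr0 // mulr1 mulrC.
by rewrite matching_sum_potential ?mulr0.
Qed.

Lemma hdot_shift_potential (R : realFieldType) (a : hedge n -> int)
    (alpha : 'I_n -> int) (y : hedge n -> R) :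
  in_P y -> hdot (fun e => a e + alpha e.1 - alpha e.2) y = hdot a y.
Proof.
move=> Py; have := in_P_potential (fun u => (alpha u)%:~R) Py.
rewrite /hdot => zero; rewrite -[RHS]addr0 -[X in _ + X]zero -big_split /=.
by apply: eq_bigr => e _; rewrite intrB intrD; ring.
Qed.

End MatchingPotential.

Definition sym_range (N : nat) : seq int :=
  [seq i%:Z - N%:Z | i <- iota 0 (2 * N).+1].

Lemma size_sym_range N : size (sym_range N) = (2 * N).+1.
Proof. by rewrite size_map size_iota. Qed.

Lemma mem_sym_range N (z : int) : `|z| <= N%:Z -> z \in sym_range N.
Proof.
by move=> zN; apply/mapP; exists (absz (z + N%:Z)); rewrite ?mem_iota; lia.
Qed.

Section DigitPotential.
Variables (B m : nat).
Hypothesis B_gt0 : (0 < B)%N.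

Let hi_digit i := (i %/ (B * B))%N.
Let mid_digit i := (i %/ B %% B)%N.
Let lo_digit i := (i %% B)%N.
Let U := hi_digit m.

Definition digit_potential (i : nat) : int :=
  B%:Z * ((B * hi_digit i)%:Z - (mid_digit i)%:Z).

Definition fwd_values : seq int :=
  [seq (2 * B)%:Z * u + w | u <- sym_range B.-1, w <- sym_range B.-1].

Definition bwd_values : seq int :=
  [seq (2 * B * B)%:Z * u + w | u <- sym_range U, w <- sym_range B.-1].

Definition potential_values : seq int :=
  [seq B%:Z * ((B * u1)%:Z - u0%:Z) | u1 <- iota 0 U.+1, u0 <- iota 0 B].

Lemma digitsE i :
  i%:Z = B%:Z * (B%:Z * (hi_digit i)%:Z + (mid_digit i)%:Z) + (lo_digit i)%:Z.
Proof.
apply/eqP; rewrite -!PoszM -!PoszD eqz_nat; apply/eqP.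
rewrite /hi_digit /mid_digit /lo_digit divnMA {1}(divn_eq i B).
by rewrite {1}(divn_eq (i %/ B) B); ring.
Qed.

Lemma hi_digit_le i : (i < m)%N -> (hi_digit i <= U)%N.
Proof. by move=> /ltnW; apply: leq_div2r. Qed.

Lemma digit_potential_mem i :
  (i < m)%N -> digit_potential i \in potential_values.
Proof.
move=> im.
apply: (allpairs_f (fun u1 u0 : nat => B%:Z * ((B * u1)%:Z - u0%:Z))).
  by rewrite mem_iota add0n ltnS hi_digit_le.
by rewrite mem_iota add0n ltn_mod.
Qed.

Lemma digit_potential_fwd i j :
  j%:Z - i%:Z + digit_potential i - digit_potential j \in fwd_values.
Proof.
have lo_i : (lo_digit i < B)%N by apply: ltn_pmod.
have lo_j : (lo_digit j < B)%N by apply: ltn_pmod.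
have mid_i : (mid_digit i < B)%N by apply: ltn_pmod.
have mid_j : (mid_digit j < B)%N by apply: ltn_pmod.
have -> : j%:Z - i%:Z + digit_potential i - digit_potential j =
    (2 * B)%:Z * ((mid_digit j)%:Z - (mid_digit i)%:Z)
    + ((lo_digit j)%:Z - (lo_digit i)%:Z).
  by rewrite /digit_potential (digitsE i) (digitsE j) !PoszM; ring.
by apply: (allpairs_f (fun u w : int => (2 * B)%:Z * u + w));
  apply: mem_sym_range; lia.
Qed.

Lemma digit_potential_bwd i j : (i < m)%N -> (j < m)%N ->
  i%:Z - j%:Z + digit_potential i - digit_potential j \in bwd_values.
Proof.
move=> /hi_digit_le hi /hi_digit_le hj.
have lo_i : (lo_digit i < B)%N by apply: ltn_pmod.
have lo_j : (lo_digit j < B)%N by apply: ltn_pmod.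
have -> : i%:Z - j%:Z + digit_potential i - digit_potential j =
    (2 * B * B)%:Z * ((hi_digit i)%:Z - (hi_digit j)%:Z)
    + ((lo_digit i)%:Z - (lo_digit j)%:Z).
  by rewrite /digit_potential (digitsE i) (digitsE j) !PoszM; ring.
by apply: (allpairs_f (fun u w : int => (2 * B * B)%:Z * u + w));
  apply: mem_sym_range; move: hi hj; rewrite -/U; lia.
Qed.

Definition cycle_values : seq int :=
  [seq c + z | c <- [:: 0; m%:Z], z <- fwd_values ++ bwd_values].

Lemma cycle_length_shift_mem i j : (i < m)%N -> (j < m)%N ->
  (let d := `|i%:Z - j%:Z|%N in if odd d then d else m - d)%N%:Z
    + digit_potential i - digit_potential j \in cycle_values.
Proof.
move=> im jm /=; set d := `|_|%N.
have [c c_end dE] : exists2 c, c \in [:: 0; m%:Z] &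
    (if odd d then d else m - d)%N%:Z = c + (j%:Z - i%:Z) \/
    (if odd d then d else m - d)%N%:Z = c + (i%:Z - j%:Z).
  by case: ifP => _; [exists 0 | exists m%:Z];
    rewrite ?inE ?eqxx ?orbT /d //; lia.
have shiftE z : c + z + digit_potential i - digit_potential j =
    c + (z + digit_potential i - digit_potential j) by ring.
have memc z : z \in fwd_values ++ bwd_values -> c + z \in cycle_values.
  by move=> zP; apply/allpairsP; exists (c, z).
by case: dE => ->; rewrite shiftE; apply: memc;
  rewrite mem_cat ?digit_potential_fwd ?digit_potential_bwd ?orbT.
Qed.

Definition coef_values (k : int) : seq int :=
  [:: 0; 1] ++ [seq k + z | z <- potential_values]
  ++ [seq k - z | z <- potential_values] ++ cycle_values.

Lemma size_coef_values k :
  (m < B.+1 ^ 3)%N -> (size (coef_values k) <= 100 * B ^ 2)%N.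
Proof.
move=> mB.
rewrite !size_cat !size_map !size_allpairs size_cat !size_allpairs.
rewrite !size_sym_range !size_iota /=.
have := leq_divM m (B * B); rewrite -/(hi_digit m) -/U.
move: mB B_gt0; rewrite !expnS expn0; nia.
Qed.

End DigitPotential.

Lemma ndistinct_le n (a : hedge n -> int) (s : seq int) :
  (forall e, a e \in s) -> (ndistinct a <= size s)%N.
Proof.
move=> a_s; apply: uniq_leq_size; first exact: undup_uniq.
by move=> z; rewrite mem_undup => /codomP [e ->].
Qed.

Lemma exists_cube_root m : exists B, (B ^ 3 <= m < B.+1 ^ 3)%N.
Proof.
elim: m => [|m [B /andP[lo hi]]]; first by exists 0%N.
have [Bm|mB] := leqP (B.+1 ^ 3) m.+1; last by exists B; rewrite mB andbT leqW.
by exists B.+1; rewrite Bm /=; move: hi Bm; rewrite !expnS expn0; nia.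
Qed.

Lemma cube_le_powR (R : realType) (B n : nat) :
  (B ^ 3 <= n)%N -> (B ^ 2)%:R <= powR (n%:R : R) (2 / 3).
Proof.
move=> Bn.
have -> : (B ^ 2)%:R = powR ((B ^ 3)%:R : R) (2 / 3).
  rewrite !natrX -(powR_mulrn 3 (ler0n _ B)) -powRrM.
  by rewrite (_ : 3%:R * (2 / 3) = 2%:R :> R) ?powR_mulrn //; field.
by apply: ge0_ler_powR; rewrite ?nnegrE ?ler0n ?ler_nat //; lra.
Qed.

Lemma cidx_lt n (v : 'I_(n - 2) -> 'I_n) x : (2 < n)%N -> (cidx v x < n - 2)%N.
Proof.
by rewrite /cidx; case: pickP => [i _|_] /= n2; [exact: ltn_ord | lia].
Qed.

Lemma kk_cycle_length n : odd n -> (3 <= n)%N -> ((2 * kk n).+1 = n - 2)%N.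
Proof.
move=> n_odd n3; rewrite /kk.
have := odd_double_half (n - 3); rewrite oddB // n_odd /= -muln2; lia.
Qed.

Section ShiftedConstraint.
Variables (n B : nat) (v : 'I_(n - 2) -> 'I_n).
Hypotheses (n_odd : odd n) (n_ge5 : (5 <= n)%N) (B_gt0 : (0 < B)%N).

Definition cycle_potential (u : 'I_n) : int :=
  if onC v u then digit_potential B (cidx v u) else 0.

Definition shifted_coef (e : hedge n) : int :=
  canon (cind_coef v) e + cycle_potential e.1 - cycle_potential e.2.

Lemma shifted_coef_mem e : shifted_coef e \in coef_values B (n - 2) (kk n).
Proof.
case: e => x y; rewrite /shifted_coef /canon /=.
have [->|_] := eqVneq x y; first by rewrite add0r subrr.
have n_gt2 : (2 < n)%N by lia.
have xm := cidx_lt v x n_gt2; have ym := cidx_lt v y n_gt2.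
rewrite /cind_coef /cycle_potential 3!mem_cat.
case: (onC v x); case: (onC v y); rewrite ?andbT ?andbF ?orbT ?orbF.
- by rewrite /ell (kk_cycle_length n_odd n_gt2) cycle_length_shift_mem ?orbT.
- by rewrite subr0 map_f ?orbT ?digit_potential_mem.
- by rewrite addr0 (map_f (fun z => _ - z)) ?orbT ?digit_potential_mem.
- by rewrite subr0 addr0 !inE orbT.
Qed.

End ShiftedConstraint.

Theorem theorem15 (R : realType) :
  exists c : R, 0 < c /\
    forall n : nat, (5 <= n)%N -> odd n ->
    forall v : 'I_(n - 2) -> 'I_n, injective v ->
    exists (a : hedge n -> int) (b : int),
      (forall y : hedge n -> R,
         (in_P y /\ hdot (canon (cind_coef v)) y = (cind_rhs n)%:~R)
         <-> (in_P y /\ hdot a y = b%:~R))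
      /\ (ndistinct a)%:R <= c * powR (n%:R) (2 / 3).
Proof.
exists 100; split; first lra.
move=> n n_ge5 n_odd v _.
have [B /andP[B3_le B3_gt]] := exists_cube_root (n - 2).
have B_gt0 : (0 < B)%N.
  by move: B3_gt; case: B {B3_le} => //; rewrite exp1n; lia.
have shiftE y : in_P y ->
    hdot (shifted_coef B v) y = hdot (canon (cind_coef v)) y.
  exact: hdot_shift_potential.
exists (shifted_coef B v), (cind_rhs n); split.
  by move=> y; split=> -[Py eq_y]; rewrite ?shiftE // -?shiftE.
have count : (ndistinct (shifted_coef B v) <= 100 * B ^ 2)%N.
  exact: leq_trans (ndistinct_le (shifted_coef_mem v n_odd n_ge5 B_gt0))
    (size_coef_values B_gt0 _ B3_gt).
apply: le_trans (_ : (100 * B ^ 2)%N%:R <= _); first by rewrite ler_nat.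
by rewrite natrM ler_pM2l ?ltr0n // cube_le_powR // (leq_trans B3_le) ?leq_subr.
Qed.
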